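(* Let $\Gamma$ be a finite connected graph and let $\Sigma$ be a motif in $\Gamma$ with vertices $p_1,\dots,p_m$. Suppose that $1$ is an eigenvalue of the normalized Laplacian of the graph $\Sigma$, with eigenfunction $f^\Sigma$. Let $\Gamma^\Sigma$ be the graph obtained from $\Gamma$ by adding new vertices $q_1,\dots,q_m$, joining $q_\alpha$ and $q_\beta$ by an edge whenever $p_\alpha\sim p_\beta$, and joining each $q_\alpha$ by an edge to every vertex $p\notin\Sigma$ that is a neighbor of $p_\alpha$ in $\Gamma$. Then $1$ is an eigenvalue of the normalized Laplacian of $\Gamma^\Sigma$, with an eigenfunction that vanishes at every vertex other than $p_1,\dots,p_m,q_1,\dots,q_m$.
   Context: For a finite simple graph without isolated vertices, write $i\sim j$ for adjacency and $n_i$ for the degree of $i$. The normalized Laplacian acts on real functions $v$ on the vertices by $\Delta v(i)=v(i)-\frac{1}{n_i}\sum_{j\sim i}v(j)$; $\lambda$ is an eigenvalue with eigenfunction $u$ if $u\not\equiv 0$ and $\frac{1}{n_i}\sum_{j\sim i}u(j)=(1-\lambda)u(i)$ for all $i$. A motif in $\Gamma$ is a connected subgraph $\Sigma$ of $\Gamma$ containing all edges of $\Gamma$ between its vertices (i.e. a connected induced subgraph). *)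

From mathcomp Require Import all_boot all_order all_algebra.
Set Implicit Arguments. Unset Strict Implicit. Unset Printing Implicit Defensive.
Import Order.TTheory GRing.Theory Num.Theory.
Local Open Scope ring_scope.

(* A (finite simple) graph is given by a vertex set A : {set V} of a finType V
   together with an adjacency relation adj : rel V; the graph is the one
   induced by adj on A. *)
Definition simple_rel (V : finType) (adj : rel V) : Prop :=
  (forall x y, adj x y = adj y x) /\ (forall x, ~~ adj x x).

Definition deg (V : finType) (A : {set V}) (adj : rel V) (i : V) : nat :=
  #|[set j in A | adj i j]|.

Definition no_isolated (V : finType) (A : {set V}) (adj : rel V) : Prop :=
  forall i, i \in A -> exists2 j, j \in A & adj i j.

Definition restr (V : finType) (A : {set V}) (adj : rel V) : rel V :=
  fun x y => [&& x \in A, y \in A & adj x y].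

Definition connected_graph (V : finType) (A : {set V}) (adj : rel V) : Prop :=
  forall x y, x \in A -> y \in A -> connect (restr A adj) x y.

Definition nl_eigenfunction (R : realFieldType) (V : finType) (A : {set V})
    (adj : rel V) (lam : R) (u : V -> R) : Prop :=
  (exists2 i, i \in A & u i != 0) /\
  (forall i, i \in A ->
     (deg A adj i)%:R^-1 * (\sum_(j in A | adj i j) u j) = (1 - lam) * u i).

(* The graph Gamma^Sigma, on vertex type T + T: inl p are the old vertices of
   Gamma (all of T), inr q for q in S is the new vertex q_alpha copying p_alpha = q. *)
Definition ext_vertices (T : finType) (S : {set T}) : {set T + T} :=
  [set x | match x with inl _ => true | inr q => q \in S end].

Definition ext_adj (T : finType) (e : rel T) (S : {set T}) : rel (T + T) :=
  fun x y =>
    match x, y with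
    | inl a, inl b => e a b
    | inr a, inr b => [&& a \in S, b \in S & e a b]
    | inl p, inr q => [&& q \in S, p \notin S & e p q]
    | inr q, inl p => [&& q \in S, p \notin S & e p q]
    end.

From mathcomp Require Import all_boot all_order all_algebra.
Set Implicit Arguments. Unset Strict Implicit. Unset Printing Implicit Defensive.
Import Order.TTheory GRing.Theory Num.Theory.
Local Open Scope ring_scope.

(* For the eigenvalue 1 the eigen-equation just says that every neighbour sum
   of f vanishes.  Copy f onto the old vertices of Sigma and -f onto the new
   ones: a vertex p_alpha only sees old vertices and a new vertex q_alpha only
   sees new vertices of Sigma, so their neighbour sums are +/- those of f in
   Sigma; a vertex p outside Sigma sees both p_alpha and q_alpha for each
   neighbour p_alpha, and the two contributions cancel. *)

Section EigenvalueOne.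

Variables (R : realFieldType) (V : finType) (A : {set V}) (adj : rel V).

Lemma nl_eigenfunction1_sum0 (u : V -> R) :
  no_isolated A adj -> nl_eigenfunction A adj 1 u ->
  forall i, i \in A -> \sum_(j in A | adj i j) u j = 0.
Proof.
move=> noiso [_ hu] i iA; have := hu i iA; rewrite subrr mul0r => /eqP.
rewrite mulf_eq0 invr_eq0 pnatr_eq0 => /orP [/eqP/cards0_eq/setP degi|/eqP //].
by case: (noiso i iA) => j jA aij; have := degi j; rewrite !inE jA aij.
Qed.

Lemma sum0_nl_eigenfunction1 (u : V -> R) :
  (exists2 i, i \in A & u i != 0) ->
  (forall i, i \in A -> \sum_(j in A | adj i j) u j = 0) ->
  nl_eigenfunction A adj 1 u.
Proof. by move=> nz hsum; split=> // i iA; rewrite hsum // mulr0 subrr mul0r. Qed.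

End EigenvalueOne.

Section MotifDoubling.

Variables (R : realFieldType) (T : finType) (e : rel T) (S : {set T}).
Variable f : T -> R.

Definition double_motif_fun (x : T + T) : R :=
  match x with
  | inl p => if p \in S then f p else 0
  | inr q => if q \in S then - f q else 0
  end.

Local Notation u := double_motif_fun.
Local Notation nsum x :=
  (\sum_(y in ext_vertices S | ext_adj e S x y) u y).

Lemma double_motif_sum_split x :
  nsum x = \sum_(p | ext_adj e S x (inl p)) u (inl p)
         + \sum_(q in S | ext_adj e S x (inr q)) u (inr q).
Proof. by rewrite big_sumType /=; congr (_ + _); apply: eq_bigl => i; rewrite inE. Qed.

Lemma double_motif_sum_old_in p : p \in S ->
  nsum (inl p) = \sum_(j in S | e p j) f j.
Proof.
move=> pS; rewrite double_motif_sum_split /= [X in _ + X]big1 ?addr0; last first.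
  by move=> q /andP [_ /and3P [_ /negP]].
rewrite big_mkcond [RHS]big_mkcond /=; apply: eq_bigr => j _.
by case: (j \in S); case: (e p j).
Qed.

Lemma double_motif_sum_old_out p : p \notin S -> nsum (inl p) = 0.
Proof.
move=> pS; rewrite double_motif_sum_split /=.
rewrite [X in X + _]big_mkcond [X in _ + X]big_mkcond /= -big_split /=.
apply: big1 => j _; rewrite pS /=.
by case: (j \in S); case: (e p j); rewrite ?subrr ?addr0.
Qed.

Lemma double_motif_sum_new q : q \in S ->
  nsum (inr q) = - \sum_(j in S | e q j) f j.
Proof.
move=> qS; rewrite double_motif_sum_split /= big1 ?add0r; last first.
  by move=> p /and3P [_ /negbTE ->].
rewrite -sumrN big_mkcond [RHS]big_mkcond /=; apply: eq_bigr => j _.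
by rewrite qS; case: (j \in S); case: (e q j).
Qed.

Lemma double_motif_fun_supp x :
  x \notin [set inl p | p in S] :|: [set inr q | q in S] -> u x = 0.
Proof.
by case: x => [p|q] /=; case: ifP => // xS;
  rewrite !inE imset_f ?orbT.
Qed.

Lemma double_motif_eigenfunction :
  no_isolated S e -> nl_eigenfunction S e 1 f ->
  nl_eigenfunction (ext_vertices S) (ext_adj e S) 1 u.
Proof.
move=> noiso hf; have fsum := nl_eigenfunction1_sum0 noiso hf.
case: hf => [[i iS fi] _]; apply: sum0_nl_eigenfunction1.
  by exists (inl i); rewrite /= ?inE ?iS.
case=> [p|q] xS; first case: (boolP (p \in S)) => pS.
- by rewrite double_motif_sum_old_in ?fsum.
- exact: double_motif_sum_old_out.
- by move: xS; rewrite inE => qS; rewrite double_motif_sum_new ?fsum ?oppr0.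
Qed.

End MotifDoubling.

Theorem theorem1 (R : realFieldType) (T : finType) (e : rel T) (S : {set T})
    (f : T -> R) :
  simple_rel e ->
  connected_graph [set: T] e ->
  connected_graph S e ->
  no_isolated S e ->
  nl_eigenfunction S e 1 f ->
  exists u : T + T -> R,
    nl_eigenfunction (ext_vertices S) (ext_adj e S) 1 u /\
    (forall x, x \in ext_vertices S ->
       x \notin [set inl p | p in S] :|: [set inr q | q in S] -> u x = 0).
Proof.
move=> _ _ _ noiso hf; exists (double_motif_fun S f); split.
  exact: double_motif_eigenfunction.
by move=> x _; apply: double_motif_fun_supp.
Qed.
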